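(* Let $n\ge 3$ be odd and let $D_{2n}$ be the dihedral group of order $2n$. Every indecomposable cycle set $X$ whose permutation group $G(X)$ is isomorphic to $D_{2n}$ satisfies $|X|=2n$.
   Context: A cycle set is a set $X$ with a binary operation $\cdot$ such that for every $x\in X$ the map $\sigma(x)\colon X\to X$, $y\mapsto x\cdot y$, is bijective, and $(x\cdot y)\cdot(x\cdot z)=(y\cdot x)\cdot(y\cdot z)$ for all $x,y,z\in X$. The permutation group $G(X)$ is the subgroup of the symmetric group on $X$ generated by all $\sigma(x)$, $x\in X$. The cycle set $X$ is indecomposable if $G(X)$ acts transitively on $X$ (equivalently, $X$ is not the disjoint union of two nonempty $G(X)$-invariant subsets). *)

From mathcomp Require Import all_boot all_fingroup all_solvable.
Set Implicit Arguments. Unset Strict Implicit. Unset Printing Implicit Defensive.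

Definition is_cycle_set (X : finType) (op : X -> X -> X) : Prop :=
  (forall x : X, bijective (op x)) /\
  (forall x y z : X, op (op x y) (op x z) = op (op y x) (op y z)).

Definition sigma_set (X : finType) (op : X -> X -> X) : {set {perm X}} :=
  [set p : {perm X} | [exists x : X, [forall y : X, p y == op x y]]].

Definition perm_group_cs (X : finType) (op : X -> X -> X) : {group {perm X}} :=
  <<sigma_set op>>%G.

Definition indecomposable_cs (X : finType) (op : X -> X -> X) : bool :=
  [transitive perm_group_cs op, on [set: X] | 'P].

From mathcomp Require Import all_boot all_fingroup all_solvable.
Set Implicit Arguments. Unset Strict Implicit. Unset Printing Implicit Defensive.
Import GroupScope.

(* A cycle set X makes G = G(X) a left brace: the sum h + k := h lambda_h(k)
   comes from concatenation of words x1 ... xk, mapped to G by a product of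
   sigmas that the cycle set identity makes commutative, and lambda_g sends
   sigma x to sigma (g x).  For G = D_2n with n odd, the abelian additive
   group has order 2n: its n-torsion is a multiplicative subgroup of order n,
   hence the rotation subgroup C, and its unique involution r lies outside C.
   Playing lambda_r (conjugation by r, i.e. inversion on C) against the
   additivity of lambda shows that lambda_d is trivial for d in C, so that
   sigma (d x) = sigma x.  C cannot then be transitive on X, otherwise all the
   sigma x coincide and G is cyclic.  As a rotation fixing a point fixes all
   of them, C-orbits have n points, so |X| > n and |X| = 2n since |X|
   divides 2n. *)

Section AbelianDoubleOdd.

Variables (gT : finGroupType) (A : {group gT}) (n : nat).
Hypotheses (abA : abelian A) (odd_n : odd n) (oA : #|A| = (2 * n)%N).

Let n_gt0 : (0 < n)%N. Proof. by case: n odd_n. Qed.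

Lemma abelian_double_odd_involution :
  exists2 t, t \in A & [/\ t != 1, t ^+ 2 = 1 &
    {in A, forall u, u ^+ 2 = 1 -> u = 1 \/ u = t}].
Proof.
have [t At ot] : {t | t \in A & #[t] = 2}.
  by apply: Cauchy => //; rewrite oA dvdn_mulr.
have hallP := nilpotent_pcore_Hall 2 (abelian_nil abA).
have card_P : #|'O_2(A)| = 2.
  rewrite (card_Hall hallP) oA partnM // part_pnat_id ?pnat_id //.
  by rewrite part_p'nat ?muln1 // p'natE // dvdn2 odd_n.
have memP u : u \in A -> u ^+ 2 = 1 -> u \in 'O_2(A).
  move=> Au u2; rewrite (mem_normal_Hall hallP (pcore_normal _ _) Au).
  have dvd_u2 : (#[u] %| 2)%N by rewrite order_dvdn u2.
  exact: pnat_dvd dvd_u2 (pnat_id _).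
have t_neq1 : t != 1 by apply/eqP => t1; move: ot; rewrite t1 order1.
have t2 : t ^+ 2 = 1 by apply/eqP; rewrite -order_dvdn ot.
have defP : 'O_2(A) = [set 1; t] :> {set gT}.
  apply/esym/eqP; rewrite eqEcard card_P cards2 eq_sym t_neq1 leqnn andbT.
  by apply/subsetP => u /set2P[] ->; rewrite ?group1 // memP.
exists t => //; split=> // u Au u2.
by have := memP u Au u2; rewrite defP => /set2P[]; [left | right].
Qed.

Lemma card_abelian_double_odd_expn :
  #|[set x in A | x ^+ n == 1]| = n.
Proof.
have hallP := nilpotent_pcore_Hall 2^' (abelian_nil abA).
suff -> : [set x in A | x ^+ n == 1] = 'O_2^'(A).
  rewrite (card_Hall hallP) oA partnM // part_p'nat ?pnatNK ?pnat_id // mul1n.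
  by rewrite part_pnat_id // p'natE // dvdn2 odd_n.
apply/setP => x; rewrite inE; case Ax: (x \in A); last first.
  by apply/esym; apply: contraFF Ax; apply: (subsetP (pcore_sub _ _)).
rewrite /= (mem_normal_Hall hallP (pcore_normal _ _) Ax) /p_elt.
rewrite p'natE // dvdn2 negbK -order_dvdn.
have dvd_x : (#[x] %| 2 * n)%N by rewrite -oA order_dvdG.
apply/idP/idP => [odd_x | x_n]; first exact: dvdn_odd odd_x odd_n.
by rewrite -(Gauss_dvdr _ (_ : coprime #[x] 2)) // coprimen2.
Qed.

End AbelianDoubleOdd.

Lemma odd_expg_involution_trivial (gT : finGroupType) (x : gT) n :
  odd n -> x ^+ n = 1 -> x ^+ 2 = 1 -> x = 1.
Proof.
move=> odd_n xn x2; apply/eqP; rewrite -order_eq1.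
have coprime_2n : coprime 2 n by rewrite coprime2n.
have : (#[x] %| gcdn 2 n)%N by rewrite dvdn_gcd !order_dvdn xn x2 eqxx.
by rewrite (eqnP coprime_2n) dvdn1.
Qed.

Lemma dihedral_rotations (gT : finGroupType) (G : {group gT}) n :
  (1 < n)%N -> G \isog 'D_(2 * n) ->
  exists C : {group gT}, [/\ C \subset G, #|G| = (2 * n)%N, #|C| = n,
    abelian C & {in G :\: C & C, forall g c, c ^ g = c^-1}].
Proof.
move=> n_gt1; rewrite mul2n.
case/(isoGrpP _ (Grp_dihedral n_gt1)); rewrite card_dihedral // => oG.
case/existsP=> -[x y] /= /eqP[defG xn y2 xy].
have{} defG : <[x]> * <[y]> = G.
  by rewrite -norm_joinEr // norms_cycle xy groupV cycle_id.
have y_notin_x : y \notin <[x]>.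
  apply/negP => Xy; have : (#|G| <= n)%N.
    rewrite -defG mulGSid ?cycle_subG //.
    by rewrite dvdn_leq ?(ltnW n_gt1) // order_dvdn xn.
  by rewrite oG -addnn leqNgt -{1}(addn0 n) ltn_add2l (ltnW n_gt1).
have oy : #[y] = 2.
  by apply: nt_prime_order => //; apply: contraNneq y_notin_x => ->.
have ox : #[x] = n.
  apply: double_inj; rewrite -muln2 -oy -oG -defG TI_cardMg //.
  by rewrite setIC prime_TIg ?cycle_subG // -orderE oy.
have conj_y c : c \in <[x]> -> c ^ y = c^-1.
  by case/cycleP => i ->; rewrite conjXg xy expgVn.
exists <[x]>%G; split; rewrite ?cycle_abelian //.
  by rewrite -defG mulG_subl.
move=> g c /setDP[]; rewrite -defG => /mulsgP[a b Xa Yb ->{g}].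
move: Yb; rewrite cycle2g // => /set2P[->|->]; first by rewrite mulg1 Xa.
move=> _ Xc.
by rewrite conjgM -conj_y // /conjg -(centsP (cycle_abelian x) a Xa c Xc) mulKg.
Qed.

Lemma normal_cycle_fixpoint (T : finType) (G : {group {perm T}}) h x :
  [transitive G, on [set: T] | 'P] -> G \subset 'N(<[h]>) -> h x = x -> h = 1.
Proof.
move=> trG nhG hx; apply/permP => y; rewrite perm1.
have /orbitP[g Gg <-] : y \in orbit 'P G x by rewrite (atransP trG) ?inE.
have /cycleP[i hg] : h ^ g^-1 \in <[h]>.
  by rewrite memJ_norm ?cycle_id // (subsetP nhG) ?groupV.
rewrite /= -permM -(conjgKV g h) hg.
by rewrite -conjgC permM permX iter_fix.
Qed.

Section CycleSetBrace.

Variables (X : finType) (op : X -> X -> X).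
Hypothesis csX : is_cycle_set op.

Local Notation G := (perm_group_cs op).

Let op_inj x : injective (op x).
Proof. by case: (csX.1 x) => g opK _; apply: can_inj opK. Qed.

Definition sigma x : {perm X} := perm (@op_inj x).

Lemma sigmaE x y : sigma x y = op x y. Proof. by rewrite permE. Qed.

Lemma mem_sigma x : sigma x \in G.
Proof.
apply: mem_gen; rewrite inE; apply/existsP; exists x; apply/forallP => y.
by rewrite sigmaE.
Qed.

Lemma sigma_setP p : p \in sigma_set op -> exists x, p = sigma x.
Proof.
rewrite inE => /existsP[x /forallP opx]; exists x; apply/permP => y.
by rewrite sigmaE; apply/eqP.
Qed.

Lemma sigma_cycle_set a b :
  sigma a * sigma (sigma a b) = sigma b * sigma (sigma b a).
Proof. by apply/permP => z; rewrite !permM !sigmaE; apply: csX.2. Qed.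

(* [word_perm [:: x1; ...; xk]] is the brace sum sigma x1 + ... + sigma xk;
   its independence of the order of the letters is the cycle set identity. *)
Definition word_perm (s : seq X) : {perm X} :=
  foldl (fun (g : {perm X}) y => g * sigma (g y)) 1 s.

Lemma word_perm_rcons s y :
  word_perm (rcons s y) = word_perm s * sigma (word_perm s y).
Proof. by rewrite /word_perm foldl_rcons. Qed.

Lemma word_perm_rcons2C s x y :
  word_perm (rcons (rcons s x) y) = word_perm (rcons (rcons s y) x).
Proof.
by rewrite !word_perm_rcons !permM -!mulgA sigma_cycle_set.
Qed.

Lemma word_perm_cat s t :
  word_perm (s ++ t) = word_perm s * word_perm (map (word_perm s) t).
Proof.
elim/last_ind: t => [|t y IHt]; first by rewrite cats0 mulg1.
by rewrite -rcons_cat map_rcons !word_perm_rcons IHt permM mulgA.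
Qed.

Lemma word_perm_cons s x : word_perm (x :: s) = word_perm (rcons s x).
Proof.
elim/last_ind: s => [//|s y IHs].
by rewrite -rcons_cons word_perm_rcons IHs -word_perm_rcons word_perm_rcons2C.
Qed.

Lemma word_perm_catC s t : word_perm (s ++ t) = word_perm (t ++ s).
Proof.
elim: s t => [|x s IHs] t; first by rewrite cats0.
by rewrite cat_cons word_perm_cons rcons_cat IHs cat_rcons.
Qed.

Lemma mem_word_perm s : word_perm s \in G.
Proof.
elim/last_ind: s => [|s y IHs]; first exact: group1.
by rewrite word_perm_rcons groupM // mem_sigma.
Qed.

Lemma word_perm_onto h : h \in G -> exists s, word_perm s = h.
Proof.
case/gen_prodgP => k [c sc ->]; elim: k c sc => [|k IHk] c sc.
  by exists [::]; rewrite big_ord0.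
rewrite big_ord_recr /=.
have [s defs] := IHk (fun i => c (widen_ord (leqnSn k) i)) (fun i => sc _).
have [x defx] := sigma_setP (sc ord_max).
exists (rcons s ((word_perm s)^-1 x)).
rewrite word_perm_rcons permKV defs -defx.
by congr (_ * _); apply: eq_bigr.
Qed.

Lemma exists_word h : exists s, (h \in G) ==> (word_perm s == h).
Proof.
have [Gh | _] := boolP (h \in G); last by exists [::].
by have [s <-] := word_perm_onto Gh; exists s; rewrite eqxx implybT.
Qed.

Definition word h := xchoose (exists_word h).

Lemma wordK h : h \in G -> word_perm (word h) = h.
Proof. by move=> Gh; have /implyP/(_ Gh)/eqP := xchooseP (exists_word h). Qed.

Definition lambda (g h : {perm X}) := word_perm (map g (word h)).

Lemma mem_lambda g h : lambda g h \in G. Proof. exact: mem_word_perm. Qed.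

Lemma lambda_word g t : g \in G -> lambda g (word_perm t) = word_perm (map g t).
Proof.
move=> Gg; apply: (mulgI g); rewrite /lambda -(wordK Gg) -!word_perm_cat.
rewrite word_perm_catC (word_perm_catC _ t) !word_perm_cat.
by rewrite wordK ?mem_word_perm.
Qed.

Lemma lambda_sigma g x : g \in G -> lambda g (sigma x) = sigma (g x).
Proof.
have sigmaW y : sigma y = word_perm [:: y] by rewrite /word_perm /= mul1g perm1.
by move=> Gg; rewrite sigmaW lambda_word // sigmaW.
Qed.

Lemma lambdaM g k h :
  g \in G -> k \in G -> lambda (g * k) h = lambda k (lambda g h).
Proof.
move=> Gg Gk; rewrite [lambda g h]/lambda lambda_word // -map_comp.
by congr word_perm; apply: eq_map => y /=; rewrite permM.
Qed.

Lemma lambda1g h : h \in G -> lambda 1 h = h.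
Proof.
move=> Gh; rewrite /lambda (eq_map (g := id)) ?map_id ?wordK // => y.
by rewrite perm1.
Qed.

Lemma lambdag1 g : g \in G -> lambda g 1 = 1.
Proof. by move=> Gg; rewrite -[1]/(word_perm [::]) lambda_word. Qed.

Lemma lambdaK g h : g \in G -> h \in G -> lambda g^-1 (lambda g h) = h.
Proof. by move=> Gg Gh; rewrite -lambdaM ?groupV // mulgV lambda1g. Qed.

Lemma lambda_inj g : g \in G -> {in G &, injective (lambda g)}.
Proof.
by move=> Gg h k Gh Gk eq_hk; rewrite -(lambdaK Gg Gh) eq_hk lambdaK.
Qed.

Definition badd (h k : {perm X}) := h * lambda h k.

Lemma badd_word s t : badd (word_perm s) (word_perm t) = word_perm (s ++ t).
Proof. by rewrite /badd lambda_word ?mem_word_perm // word_perm_cat. Qed.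

Lemma baddE h k : h \in G -> k \in G -> badd h k = word_perm (word h ++ word k).
Proof. by move=> Gh Gk; rewrite -badd_word !wordK. Qed.

Lemma mem_badd h k : h \in G -> badd h k \in G.
Proof. by move=> Gh; rewrite groupM // mem_lambda. Qed.

Lemma baddC h k : h \in G -> k \in G -> badd h k = badd k h.
Proof. by move=> Gh Gk; rewrite !baddE // word_perm_catC. Qed.

Lemma badd1g h : h \in G -> badd 1 h = h.
Proof. by move=> Gh; rewrite /badd lambda1g // mul1g. Qed.

Lemma baddg1 h : h \in G -> badd h 1 = h.
Proof. by move=> Gh; rewrite /badd lambdag1 // mulg1. Qed.

Lemma baddA h k l : h \in G -> k \in G -> l \in G ->
  badd (badd h k) l = badd h (badd k l).
Proof.
move=> Gh Gk Gl; rewrite (baddE Gh Gk) (baddE Gk Gl).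
by rewrite -{1}(wordK Gl) -{2}(wordK Gh) !badd_word catA.
Qed.

Lemma lambda_badd g h k : g \in G -> h \in G -> k \in G ->
  lambda g (badd h k) = badd (lambda g h) (lambda g k).
Proof.
move=> Gg Gh Gk; rewrite (baddE Gh Gk) lambda_word // map_cat -badd_word.
by rewrite -!lambda_word // !wordK.
Qed.

Lemma baddI h : h \in G -> {in G &, injective (badd h)}.
Proof. by move=> Gh a b Ga Gb /mulgI; apply: lambda_inj. Qed.

Definition shift_fun (h a : {perm X}) :=
  if (a \in G) && (h \in G) then badd a h else a.

Lemma shift_fun_inj h : injective (shift_fun h).
Proof.
rewrite /shift_fun => a b; have [Gh | _] := boolP (h \in G); last first.
  by rewrite !andbF.
rewrite !andbT.
case: (boolP (a \in G)) => Ga; case: (boolP (b \in G)) => Gb //.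
- by rewrite !(baddC _ Gh) //; apply: baddI.
- by move=> eq_ab; case/negP: Gb; rewrite -eq_ab mem_badd.
- by move=> eq_ab; case/negP: Ga; rewrite eq_ab mem_badd.
Qed.

(* The additive group of the brace is realised as its group of translations;
   [shift h] is the identity off G, and for h outside G. *)
Definition shift h : {perm {perm X}} := perm (@shift_fun_inj h).

Lemma shiftE h a : h \in G -> a \in G -> shift h a = badd a h.
Proof. by move=> Gh Ga; rewrite permE /shift_fun Ga Gh. Qed.

Lemma shift_out h a : a \notin G -> shift h a = a.
Proof. by move=> Ga; rewrite permE /shift_fun (negbTE Ga). Qed.

Lemma shiftM h k : h \in G -> k \in G -> shift h * shift k = shift (badd h k).
Proof.
move=> Gh Gk; apply/permP => a; rewrite permM.
have [Ga | Ga] := boolP (a \in G); last by rewrite !shift_out.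
by rewrite !shiftE ?mem_badd // baddA.
Qed.

Lemma shift1 : shift 1 = 1.
Proof.
apply/permP => a; rewrite perm1; have [Ga | Ga] := boolP (a \in G).
  by rewrite shiftE // baddg1.
by rewrite shift_out.
Qed.

Lemma shift_inj : {in G &, injective shift}.
Proof.
by move=> h k Gh Gk eq_hk; rewrite -(badd1g Gh) -shiftE // eq_hk shiftE ?badd1g.
Qed.

Lemma shift_eq1 h : h \in G -> (shift h == 1) = (h == 1).
Proof.
move=> Gh; apply/eqP/eqP => [h1 | ->]; last exact: shift1.
by apply: shift_inj; rewrite ?group1 ?shift1.
Qed.

Lemma group_set_shifts : group_set (shift @: G).
Proof.
apply/group_setP; split; first by apply/imsetP; exists 1; rewrite ?shift1.
move=> _ _ /imsetP[h Gh ->] /imsetP[k Gk ->]; rewrite shiftM //.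
by apply/imsetP; exists (badd h k); rewrite ?mem_badd.
Qed.

Definition shifts := Group group_set_shifts.

Lemma card_shifts : #|shifts| = #|G|.
Proof. exact: card_in_imset shift_inj. Qed.

Lemma abelian_shifts : abelian shifts.
Proof.
apply/centsP => _ /imsetP[h Gh ->] _ /imsetP[k Gk ->].
by rewrite /commute !shiftM // baddC.
Qed.

Lemma shiftX_lambda g h m : g \in G -> h \in G ->
  (shift (lambda g h) ^+ m == 1) = (shift h ^+ m == 1).
Proof.
move=> Gg Gh; pose bmul i k := iter i (badd k) 1.
have Gbmul i k : k \in G -> bmul i k \in G.
  by move=> Gk; elim: i => [|i IHi] /=; rewrite ?group1 ?mem_badd.
have shiftX i k : k \in G -> shift k ^+ i = shift (bmul i k).
  move=> Gk; elim: i => [|i IHi]; first by rewrite expg0 shift1.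
  by rewrite expgS IHi shiftM ?Gbmul.
have lambda_bmul i : lambda g (bmul i h) = bmul i (lambda g h).
  elim: i => [|i IHi] /=; first by rewrite lambdag1.
  by rewrite lambda_badd ?Gbmul // IHi.
rewrite !shiftX ?mem_lambda // !shift_eq1 ?Gbmul ?mem_lambda // -lambda_bmul.
apply/eqP/eqP => [bmul1 | ->]; last exact: lambdag1.
by apply: (lambda_inj Gg); rewrite ?Gbmul ?group1 // lambdag1.
Qed.

End CycleSetBrace.

Section DihedralCycleSet.

Variables (X : finType) (op : X -> X -> X).
Hypothesis csX : is_cycle_set op.

Local Notation G := (perm_group_cs op).
Local Notation sigma := (sigma csX).
Local Notation lambda := (lambda csX).
Local Notation badd := (badd csX).
Local Notation shift := (shift csX).
Local Notation shifts := (shifts csX).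

Variables (n : nat) (C : {group {perm X}}).
Hypotheses (odd_n : odd n) (n_gt1 : (1 < n)%N).
Hypotheses (sCG : C \subset G) (oG : #|G| = (2 * n)%N) (oC : #|C| = n).
Hypothesis abC : abelian C.
Hypothesis invC : {in G :\: C & C, forall g c, c ^ g = c^-1}.

Let oS : #|shifts| = (2 * n)%N. Proof. by rewrite card_shifts oG. Qed.

Lemma index_C : #|G : C| = 2.
Proof. by rewrite -(divgS sCG) oG /= oC mulnK // ltnW. Qed.

Lemma Hall_C : 2^'.-Hall(G) C.
Proof.
rewrite /pHall sCG /pgroup oC index_C pnatNK pnat_id // andbT.
by rewrite p'natE // dvdn2 odd_n.
Qed.

Lemma expg_C c : c \in C -> c ^+ n = 1.
Proof. by move=> Cc; rewrite -oC expg_cardG. Qed.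

Lemma C_involution_trivial c : c \in C -> c ^+ 2 = 1 -> c = 1.
Proof. by move=> Cc; apply: odd_expg_involution_trivial odd_n (expg_C Cc). Qed.

Lemma C_sub_G c : c \in C -> c \in G.
Proof. exact: (subsetP sCG). Qed.

Definition add_torsion := [set h in G | shift h ^+ n == 1].

Lemma card_add_torsion : #|add_torsion| = n.
Proof.
rewrite -(card_abelian_double_odd_expn (abelian_shifts csX) odd_n oS).
have -> : [set x in shifts | x ^+ n == 1] = shift @: add_torsion.
  apply/setP => x; apply/idP/imsetP.
    by rewrite inE => /andP[/imsetP[h Gh ->] h1]; exists h; rewrite // inE Gh.
  by case=> h; rewrite !inE => /andP[Gh h1] ->; rewrite h1 imset_f.
rewrite card_in_imset // => h k; rewrite !inE => /andP[Gh _] /andP[Gk _].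
exact: shift_inj.
Qed.

Lemma lambda_add_torsion g h : g \in G -> h \in G ->
  (lambda g h \in add_torsion) = (h \in add_torsion).
Proof. by move=> Gg Gh; rewrite !inE mem_lambda Gh shiftX_lambda. Qed.

Lemma badd_add_torsion h k : h \in add_torsion -> k \in add_torsion ->
  badd h k \in add_torsion.
Proof.
rewrite !inE => /andP[Gh h1] /andP[Gk k1]; rewrite mem_badd //= -shiftM //.
rewrite expgMn ?(eqP h1) ?(eqP k1) ?mulg1 //.
by apply: (centsP (abelian_shifts csX)); apply: imset_f.
Qed.

Lemma group_set_add_torsion : group_set add_torsion.
Proof.
apply/group_setP; split; first by rewrite inE group1 shift1 expg1n eqxx.
move=> h k Th Tk; have Gh : h \in G by case/setIdP: Th.
have Gk : k \in G by case/setIdP: Tk.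
have -> : h * k = badd h (lambda h^-1 k).
  by rewrite /badd -lambdaM ?groupV // mulVg lambda1g.
by apply: badd_add_torsion; rewrite // lambda_add_torsion ?groupV.
Qed.

(* The additive n-torsion is a multiplicative subgroup of odd order n, hence
   the normal Hall 2'-subgroup C. *)
Lemma add_torsionE : add_torsion = C.
Proof.
pose T := Group group_set_add_torsion.
have sTG : T \subset G by apply/subsetP => h /setIdP[].
have sTC : T \subset C.
  rewrite (sub_normal_Hall Hall_C (index2_normal sCG index_C) sTG).
  by rewrite /pgroup /= card_add_torsion p'natE // dvdn2 odd_n.
by apply/eqP; rewrite eqEcard sTC card_add_torsion oC /=.
Qed.

Lemma exists_add_involution :
  exists2 r, r \in G & [/\ r != 1, shift r ^+ 2 = 1 &
    {in G, forall u, shift u ^+ 2 = 1 -> u = 1 \/ u = r}].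
Proof.
have [t St [t_neq1 t2 t_uniq]] :=
  abelian_double_odd_involution (abelian_shifts csX) odd_n oS.
have [r Gr def_t] := imsetP St.
exists r => //; split; first by rewrite -(shift_eq1 csX Gr) -def_t.
  by rewrite -def_t.
move=> u Gu u2; have [|] := t_uniq (shift u) (imset_f _ Gu) u2.
  by move/eqP; rewrite shift_eq1 // => /eqP; left.
by rewrite def_t => eq_ur; right; apply: shift_inj eq_ur.
Qed.

Section AdditiveInvolution.

Variable r : {perm X}.
Hypotheses (Gr : r \in G) (r_neq1 : r != 1) (r2 : shift r ^+ 2 = 1).
Hypothesis r_uniq : {in G, forall u, shift u ^+ 2 = 1 -> u = 1 \/ u = r}.

Lemma r_notin_C : r \notin C.
Proof.
rewrite -add_torsionE inE Gr /=; apply: contra r_neq1 => /eqP rn.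
by rewrite -(shift_eq1 csX Gr) (odd_expg_involution_trivial odd_n rn r2).
Qed.

Lemma conjg_r_C c : c \in C -> c ^ r = c^-1.
Proof. by apply: invC; rewrite inE r_notin_C. Qed.

Lemma lambda_r g : g \in G -> lambda g r = r.
Proof.
move=> Gg; have r2' : shift (lambda g r) ^+ 2 = 1.
  by apply/eqP; rewrite shiftX_lambda // r2.
case: (r_uniq (mem_lambda csX g r) r2') => // lambda_r1.
by case/eqP: r_neq1; rewrite -(lambdaK csX Gg Gr) lambda_r1 lambdag1 ?groupV.
Qed.

Lemma lambda_rE k : k \in G -> lambda r k = k ^ r.
Proof.
move=> Gk; have := baddC csX Gr Gk; rewrite /badd lambda_r // /conjg => <-.
by rewrite mulKg.
Qed.

Lemma lambda_r_C c : c \in C -> lambda r c = c^-1.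
Proof. by move=> Cc; rewrite lambda_rE ?conjg_r_C ?C_sub_G. Qed.

Lemma lambda_C g c : g \in G -> c \in C -> lambda g c \in C.
Proof.
move=> Gg Cc.
by rewrite -add_torsionE lambda_add_torsion ?add_torsionE // C_sub_G.
Qed.

Lemma badd_C_invg c : c \in C -> badd c c^-1 = 1.
Proof.
move=> Cc; have Cc' : c^-1 \in C by rewrite groupV.
have Cu : badd c c^-1 \in C.
  by rewrite -add_torsionE badd_add_torsion ?add_torsionE.
apply: C_involution_trivial => //; apply/eqP; rewrite expgS expg1 -eq_invg_mul.
rewrite -(lambda_r_C Cu) (lambda_badd _ Gr (C_sub_G Cc) (C_sub_G Cc')).
by rewrite !lambda_r_C // invgK baddC // C_sub_G.
Qed.

Lemma lambda_Vr g c : g \in G -> c \in C -> lambda g c^-1 = (lambda g c)^-1.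
Proof.
move=> Gg Cc; have Cc' : c^-1 \in C by rewrite groupV.
have Cgc := lambda_C Gg Cc.
apply: (baddI (mem_lambda csX g c)); rewrite ?groupV ?mem_lambda //.
rewrite -(lambda_badd _ Gg (C_sub_G Cc) (C_sub_G Cc')).
by rewrite !badd_C_invg ?lambdag1.
Qed.

Lemma lambda_Vl g c : g \in C -> c \in C -> lambda g^-1 c = lambda g c.
Proof.
move=> Cg Cc; have Gg := C_sub_G Cg.
have gr : g * r = r * g^-1.
  by rewrite -(conjg_r_C Cg) /conjg !mulgA mulgV mul1g.
apply: invg_inj; rewrite -(lambda_r_C (lambda_C Gg Cc)) -lambdaM // gr.
by rewrite lambdaM ?groupV // lambda_r_C // lambda_Vr ?groupV.
Qed.

(* n is odd, so every d in C is a square e * e, and lambda_(e * e) acts on C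
   as lambda_e^-1 after lambda_e. *)
Lemma lambda_C_C d c : d \in C -> c \in C -> lambda d c = c.
Proof.
move=> Cd Cc; pose e := d ^+ n.+1./2.
have Ce : e \in C by rewrite groupX.
have -> : d = e * e.
  have half2 : (n.+1./2 + n.+1./2 = n.+1)%N.
    by rewrite addnn -[RHS]odd_double_half /= odd_n.
  by rewrite -expgD half2 expgSr expg_C // mul1g.
rewrite lambdaM ?C_sub_G // -lambda_Vl ?lambda_C ?C_sub_G //.
by rewrite lambdaK ?C_sub_G.
Qed.

Lemma lambda_C_trivial d h : d \in C -> h \in G -> lambda d h = h.
Proof.
move=> Cd Gh; have [Ch | nCh] := boolP (h \in C); first exact: lambda_C_C.
have : h \in C :* r by rewrite (rcoset_index2 sCG index_C) ?inE ?nCh ?r_notin_C.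
case/rcosetP => c Cc ->.
have -> : c * r = badd r c.
  by rewrite /badd lambda_r_C // conjgC conjg_r_C.
rewrite (lambda_badd _ (C_sub_G Cd) Gr (C_sub_G Cc)).
by rewrite lambda_r ?lambda_C_C ?C_sub_G.
Qed.

End AdditiveInvolution.

Lemma sigma_C d x : d \in C -> sigma (d x) = sigma x.
Proof.
have [r Gr [r_neq1 r2 r_uniq]] := exists_add_involution.
move=> Cd; rewrite -lambda_sigma ?C_sub_G //.
by rewrite (lambda_C_trivial Gr r_neq1 r2 r_uniq) ?mem_sigma.
Qed.

Lemma G_nonabelian : ~~ abelian G.
Proof.
apply/negP => abG.
have [c Cc c_neq1] : exists2 c, c \in C & c != 1.
  by apply/trivgPn; rewrite trivg_card1 oC gtn_eqF.
have [g Gg nCg] : exists2 g, g \in G & g \notin C.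
  apply/subsetPn; apply/negP => sGC; have := subset_leq_card sGC.
  by rewrite oG oC leqNgt ltn_Pmull // ltnW.
case/eqP: c_neq1; apply: C_involution_trivial => //.
have cg : c ^ g = c by rewrite /conjg -(centsP abG g Gg c (C_sub_G Cc)) mulKg.
by rewrite expgS expg1 -{1}cg invC ?inE ?nCg // mulVg.
Qed.

Lemma C_normalizes_cycle h : h \in C -> G \subset 'N(<[h]>).
Proof.
move=> Ch; apply/subsetP => g Gg; rewrite inE -cycleJ.
have [Cg | nCg] := boolP (g \in C).
  by rewrite /conjg -(centsP abC g Cg h Ch) mulKg.
by rewrite invC ?inE ?nCg // cycleV.
Qed.

Section Indecomposable.

Hypothesis trX : indecomposable_cs op.

Lemma card_orbit_C x : #|orbit 'P C x| = n.
Proof.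
have stab1 : 'C_C[x | 'P] = 1.
  apply/trivgP/subsetP => h /setIP[Ch /astab1P hx]; rewrite inE; apply/eqP.
  exact: normal_cycle_fixpoint trX (C_normalizes_cycle Ch) hx.
by have := card_orbit_stab 'P C x; rewrite stab1 cards1 muln1 oC.
Qed.

Lemma orbit_C_proper x : orbit 'P C x != [set: X].
Proof.
apply: contra G_nonabelian => /eqP orbitCx.
have sigma_const z : sigma z = sigma x.
  have : z \in orbit 'P C x by rewrite orbitCx inE.
  by case/orbitP => d Cd <-; apply: sigma_C.
apply: abelianS (cycle_abelian (sigma x)).
rewrite gen_subG; apply/subsetP => _ /(sigma_setP csX)[z ->].
by rewrite sigma_const cycle_id.
Qed.

Lemma card_indecomposable : #|X| = (2 * n)%N.
Proof.
have [x _ defX] := imsetP trX.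
have ltnX : (n < #|X|)%N.
  by rewrite -(card_orbit_C x) -cardsT proper_card // properT orbit_C_proper.
have := card_orbit_stab 'P G x; rewrite -defX cardsT oG => card_X.
suff stab1 : #|'C_G[x | 'P]| = 1%N by rewrite -card_X stab1 muln1.
apply/eqP; rewrite eqn_leq cardG_gt0 andbT leqNgt; apply/negP => stab_gt1.
have := leq_mul (leqnn #|X|) stab_gt1.
by rewrite card_X mulnC leq_pmul2l // leqNgt ltnX.
Qed.

End Indecomposable.

End DihedralCycleSet.

Theorem theorem2 (n : nat) (X : finType) (op : X -> X -> X) :
  3 <= n -> odd n ->
  is_cycle_set op ->
  indecomposable_cs op ->
  perm_group_cs op \isog 'D_(2 * n) ->
  #|X| = (2 * n)%N.
Proof.
move=> n_ge3 odd_n csX trX isoG.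
have n_gt1 : 1 < n := ltnW n_ge3.
have [C [sCG oG oC abC invC]] := dihedral_rotations n_gt1 isoG.
exact: card_indecomposable odd_n n_gt1 sCG oG oC abC invC trX.
Qed.
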